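(* For all FDSs $A,B$, $\widetilde{A}\,\widetilde{B}=\widetilde{AB}$ (isomorphism of forests).
   Context: A finite dynamical system (FDS) is a function $A:S_A\to S_A$ on a finite set; the product $AB$ acts on $S_A\times S_B$ by $(a,b)\mapsto(A(a),B(b))$. Write $A^{\circ m}$ for the $m$-fold iterate of $A$; a state $s$ is a cycle state if $A^{\circ m}(s)=s$ for some $m>0$. The unrolling $\widetilde{A}$ is the forest with vertex set $\{(s,k)\in S_A\times\mathbb{N}: A^{\circ k}(s)\text{ is a cycle state}\}$ and an arc $(s,k)\to(A(s),k-1)$ for each such vertex with $k\ge1$; the roots are the vertices $(a,0)$. A forest is a disjoint union of rooted in-trees (arcs towards the root); the depth of a vertex is its distance to the root of its tree. The product of forests $\mathbf{F},\mathbf{G}$ has vertex set $\{(x,y):x\in\mathbf{F},y\in\mathbf{G},\operatorname{depth}(x)=\operatorname{depth}(y)\}$ and an arc $(x,y)\to(x',y')$ whenever $x\to x'$ and $y\to y'$ are arcs of $\mathbf{F}$ and $\mathbf{G}$. *)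

From mathcomp Require Import all_boot.
Set Implicit Arguments. Unset Strict Implicit. Unset Printing Implicit Defensive.

(* A finite dynamical system is a function A : T -> T on a finType T. *)

Definition cycle_state (T : Type) (A : T -> T) (s : T) : Prop :=
  exists m, 0 < m /\ iter m A s = s.

Definition fds_prod (TA TB : Type) (A : TA -> TA) (B : TB -> TB) :
  TA * TB -> TA * TB := fun p => (A p.1, B p.2).

(* A (possibly infinite) directed graph given by a carrier type, a vertex
   predicate and an arc relation; forests are such graphs whose arcs point
   towards the roots. *)
Record forest := Forest {
  fV : Type;
  fvert : fV -> Prop;
  farc : fV -> fV -> Prop }.

Definition is_root (F : forest) (x : fV F) : Prop :=
  fvert x /\ ~ (exists y, fvert y /\ farc x y).

Inductive depth (F : forest) : fV F -> nat -> Prop :=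
| depth0 x : is_root x -> depth x 0
| depthS x y n : fvert x -> fvert y -> farc x y -> depth y n -> depth x n.+1.

Definition forest_prod (F G : forest) : forest :=
  @Forest (fV F * fV G)
    (fun p => fvert p.1 /\ fvert p.2 /\ exists n, depth p.1 n /\ depth p.2 n)
    (fun p q => farc p.1 q.1 /\ farc p.2 q.2).

Definition unroll (T : Type) (A : T -> T) : forest :=
  @Forest (T * nat)
    (fun v => cycle_state A (iter v.2 A v.1))
    (fun v w => 0 < v.2 /\ w = (A v.1, v.2.-1)).

Definition forest_iso (F G : forest) : Prop :=
  exists g : fV F -> fV G,
    [/\ (forall x, fvert x -> fvert (g x)),
        (forall x y, fvert x -> fvert y -> g x = g y -> x = y),
        (forall y, fvert y -> exists2 x, fvert x & g x = y) &
        (forall x y, fvert x -> fvert y -> (farc x y <-> farc (g x) (g y)))].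

From mathcomp Require Import all_boot.

(* In the unrolling the depth of a vertex [(s, k)] is just its label [k], so
   a pair of vertices of equal depth is a pair [((a, k), (b, k))], i.e. the
   vertex [((a, b), k)] of the unrolling of the product; being a cycle state
   of [AB] means being a cycle state of both factors, since a common period
   is the product of the two periods. *)

Lemma iter_fds_prod (TA TB : Type) (A : TA -> TA) (B : TB -> TB) n a b :
  iter n (fds_prod A B) (a, b) = (iter n A a, iter n B b).
Proof. by elim: n => //= n ->. Qed.

Lemma cycle_state_prod (TA TB : Type) (A : TA -> TA) (B : TB -> TB) a b :
  cycle_state (fds_prod A B) (a, b) <-> cycle_state A a /\ cycle_state B b.
Proof.
rewrite /cycle_state; split.
  by move=> [m [m_gt0]]; rewrite iter_fds_prod => -[Ea Eb]; split; exists m.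
move=> [[m [m_gt0 Ea]] [n [n_gt0 Eb]]]; exists (m * n); split.
  by rewrite muln_gt0 m_gt0.
by rewrite iter_fds_prod {1}mulnC !iterM (iter_fix _ Ea) (iter_fix _ Eb).
Qed.

Lemma depth_unroll (T : Type) (A : T -> T) (v : T * nat) n :
  @depth (unroll A) v n <-> @fvert (unroll A) v /\ v.2 = n.
Proof.
split.
  elim=> [[s [|k]] [vert_v no_arc] | [s [|k]] w m vert_v _ [//= _ ->] _ [_ <-]] //.
  exfalso; apply: no_arc; exists (A s, k).
  by split => //=; rewrite -iterSr.
case: v => s k /= [vert_v <-].
elim: k s vert_v => [|k IHk] s vert_v.
  by apply: depth0; split=> // -[w [_ []]].
have vert_As : cycle_state A (iter k A (A s)) by rewrite -iterSr.
exact: (@depthS (unroll A) (s, k.+1) (A s, k)) (IHk _ vert_As).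
Qed.

Lemma vert_prod_unroll (TA TB : Type) (A : TA -> TA) (B : TB -> TB) a i b j :
  @fvert (forest_prod (unroll A) (unroll B)) ((a, i), (b, j)) <->
  i = j /\ @fvert (unroll (fds_prod A B)) ((a, b), i).
Proof.
rewrite /= iter_fds_prod; split.
  move=> [va [vb [n [/depth_unroll [_ /= Ei] /depth_unroll [_ /= Ej]]]]].
  by subst; split=> //; apply/cycle_state_prod.
move=> [<- /cycle_state_prod [va vb]]; do 2!split=> //.
by exists i; split; apply/depth_unroll.
Qed.

Theorem forest_iso_prod_unroll (TA TB : Type) (A : TA -> TA) (B : TB -> TB) :
  forest_iso (forest_prod (unroll A) (unroll B)) (unroll (fds_prod A B)).
Proof.
exists (fun p : (TA * nat) * (TB * nat) => ((p.1.1, p.2.1), p.1.2)); split.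
- by move=> [[a i] [b j]] /vert_prod_unroll [].
- move=> [[a i] [b j]] [[a' i'] [b' j']].
  by move=> /vert_prod_unroll [<- _] /vert_prod_unroll [<- _] /= [-> -> ->].
- move=> [[a b] k] vert_abk; exists ((a, k), (b, k)) => //.
  exact/vert_prod_unroll.
- move=> [[a i] [b j]] [[a' i'] [b' j']].
  move=> /vert_prod_unroll [<- _] /vert_prod_unroll [<- _] /=; split.
    by move=> [[i_gt0 [-> ->]] [_ [->]]]; split.
  by move=> [i_gt0 [-> -> ->]]; do 2!split.
Qed.

Theorem mainTheorem14 (TA TB : finType) (A : TA -> TA) (B : TB -> TB) :
  forest_iso (forest_prod (unroll A) (unroll B)) (unroll (fds_prod A B)).
Proof. exact: forest_iso_prod_unroll. Qed.
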